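(* Let $P\in\Delta_{\mathcal{T},\mathcal{X},\mathcal{Y}}$, let $Q^*$ be a minimizer of $I_Q(T:X\mid Y)$ over $Q\in\Delta_P$, and let $(t,x,y)\in\operatorname{supp}(\Delta_P)$. If $Q^*(t,x,y)=0$, then $Q^*(X=x,Y=y)=0$; consequently $Q^*(t',x,y)=0$ for all $t'\in\mathcal{T}$.
   Context: $T,X,Y$ are random variables with finite state spaces $\mathcal{T},\mathcal{X},\mathcal{Y}$; $\Delta_{\mathcal{T},\mathcal{X},\mathcal{Y}}$ is the set of all joint distributions on $\mathcal{T}\times\mathcal{X}\times\mathcal{Y}$. For $P\in\Delta_{\mathcal{T},\mathcal{X},\mathcal{Y}}$, $\Delta_P=\{Q\in\Delta_{\mathcal{T},\mathcal{X},\mathcal{Y}}: Q(X=x,T=t)=P(X=x,T=t),\ Q(Y=y,T=t)=P(Y=y,T=t)\ \forall x,y,t\}$ and $\operatorname{supp}(\Delta_P)=\bigcup_{Q\in\Delta_P}\operatorname{supp}(Q)$. $I_Q(T:X\mid Y)$ is the conditional mutual information under $Q$. *)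

From HB Require Import structures.
From mathcomp Require Import all_boot.
From Stdlib Require Import Reals.
Set Implicit Arguments. Unset Strict Implicit. Unset Printing Implicit Defensive.

Local Open Scope R_scope.

Lemma Rplus_assoc' : associative Rplus.
Proof. by move=> a b c; rewrite Rplus_assoc. Qed.
HB.instance Definition _ := Monoid.isComLaw.Build R R0 Rplus
  Rplus_assoc' Rplus_comm Rplus_0_l.

Definition rsum (I : finType) (F : I -> R) : R := \big[Rplus/R0]_(i : I) F i.

Section Info.
Variables (T X Y : finType).

Definition jfun := T -> X -> Y -> R.

Definition is_dist (Q : jfun) : Prop :=
  (forall t x y, 0 <= Q t x y) /\
  rsum (fun t => rsum (fun x => rsum (fun y => Q t x y))) = 1.

Definition margTX (Q : jfun) (t : T) (x : X) : R := rsum (fun y => Q t x y).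
Definition margTY (Q : jfun) (t : T) (y : Y) : R := rsum (fun x => Q t x y).
Definition margXY (Q : jfun) (x : X) (y : Y) : R := rsum (fun t => Q t x y).
Definition margY (Q : jfun) (y : Y) : R :=
  rsum (fun t => rsum (fun x => Q t x y)).

Definition condMI (Q : jfun) : R :=
  rsum (fun t => rsum (fun x => rsum (fun y =>
    if Req_EM_T (Q t x y) 0 then 0
    else Q t x y * ln (Q t x y * margY Q y / (margTY Q t y * margXY Q x y))))).

Definition DeltaP (P Q : jfun) : Prop :=
  is_dist Q /\
  (forall t x, margTX Q t x = margTX P t x) /\
  (forall t y, margTY Q t y = margTY P t y).

Definition suppDeltaP (P : jfun) (t : T) (x : X) (y : Y) : Prop :=
  exists Q, DeltaP P Q /\ Q t x y <> 0.

Definition is_CMI_minimizer (P Qs : jfun) : Prop :=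
  DeltaP P Qs /\ forall Q, DeltaP P Q -> condMI Qs <= condMI Q.

End Info.

From mathcomp Require Import all_boot.
From Stdlib Require Import Reals Lra Classical.
Set Implicit Arguments. Unset Strict Implicit.
Local Open Scope R_scope.

(* Write I_Q(T:X|Y) = H_Q(T|Y) - H_Q(T|X,Y).  The first term only depends on
   the (T,Y)-marginal, hence is constant on Delta_P, and -H_Q(T|X,Y) is a sum
   of terms u ln u.  Suppose Q*(t,x,y) = 0 < Q*(x,y) and Q(t,x,y) > 0 for some
   Q in Delta_P.  Moving from Q* towards Q by a weight e changes -H(T|X,Y) by
   at most e K + e ln e Q(t,x,y) for a constant K: the entry (t,x,y) enters
   with the infinite slope of u ln u at 0, which the marginal (x,y) does not.
   For small e this is negative, contradicting minimality of Q*. *)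

Section Rsum.
Variable I : finType.
Implicit Types F G : I -> R.

Lemma eq_rsum F G : F =1 G -> rsum F = rsum G.
Proof. by move=> eqFG; apply: eq_bigr => i _. Qed.

Lemma rsumD F G : rsum (fun i => F i + G i) = rsum F + rsum G.
Proof. by rewrite /rsum big_split. Qed.

Lemma rsumZ c F : rsum (fun i => c * F i) = c * rsum F.
Proof. by rewrite /rsum; elim/big_rec2: _ => [|i a b _ ->]; ring. Qed.

Lemma rsumZr c F : rsum (fun i => F i * c) = rsum F * c.
Proof. by rewrite /rsum; elim/big_rec2: _ => [|i a b _ ->]; ring. Qed.

Lemma rsumB F G : rsum (fun i => F i - G i) = rsum F - rsum G.
Proof.
have := rsumD (fun i => F i - G i) G.
rewrite (@eq_rsum (fun i => F i - G i + G i) F) => [|i]; [lra | ring].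
Qed.

Lemma rsum_le F G : (forall i, F i <= G i) -> rsum F <= rsum G.
Proof.
move=> leFG; rewrite /rsum; elim/big_rec2: _ => [|i a b _]; first lra.
by have := leFG i; lra.
Qed.

Lemma rsum_ge0 F : (forall i, 0 <= F i) -> 0 <= rsum F.
Proof.
move=> F_ge0; rewrite /rsum; elim/big_rec: _ => [|i a _]; first lra.
by have := F_ge0 i; lra.
Qed.

Lemma rsum_ge_term F i0 : (forall i, 0 <= F i) -> F i0 <= rsum F.
Proof.
move=> F_ge0; rewrite /rsum (bigD1 i0) //=.
have : 0 <= \big[Rplus/R0]_(i | i != i0) F i.
  by elim/big_rec: _ => [|i a _]; [lra | have := F_ge0 i; lra].
lra.
Qed.

Lemma rsum_eq0_term F i0 : (forall i, 0 <= F i) -> rsum F = 0 -> F i0 = 0.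
Proof. by move=> F_ge0 F0; have := rsum_ge_term i0 F_ge0; have := F_ge0 i0; lra. Qed.

End Rsum.

Lemma rsum_exchange (I J : finType) (F : I -> J -> R) :
  rsum (fun i => rsum (fun j => F i j)) = rsum (fun j => rsum (fun i => F i j)).
Proof. by rewrite /rsum exchange_big. Qed.

Lemma ln_mul_div q a b c : 0 < q -> 0 < a -> 0 < b -> 0 < c ->
  ln (q * a / (b * c)) = ln q + ln a - ln b - ln c.
Proof.
move=> *; rewrite /Rdiv ln_mult ?ln_Rinv ?ln_mult //; try lra;
  try apply: Rmult_lt_0_compat => //.
by apply: Rinv_0_lt_compat; apply: Rmult_lt_0_compat.
Qed.

Definition xlnx (u : R) := u * ln u.

Lemma xlnx0 : xlnx 0 = 0.
Proof. by rewrite /xlnx; ring. Qed.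

Lemma ln_le_subr1 z : 0 < z -> ln z <= z - 1.
Proof. by move=> z_gt0; have := exp_ineq1_le (ln z); rewrite exp_ln //; lra. Qed.

Lemma xlnx_tangent u m : 0 <= u -> 0 < m -> xlnx m + (ln m + 1) * (u - m) <= xlnx u.
Proof.
rewrite /xlnx => u_ge0 m_gt0.
have [->|u_neq0] := Req_dec u 0; first by rewrite Rmult_0_l; lra.
have u_gt0 : 0 < u by lra.
have := ln_le_subr1 (Rdiv_lt_0_compat _ _ m_gt0 u_gt0).
rewrite /Rdiv ln_mult ?ln_Rinv; try apply: Rinv_0_lt_compat; try lra.
move=> ln_le.
have : u * (ln m - ln u) <= u * (m * / u - 1) by apply: Rmult_le_compat_l; lra.
have -> : u * (m * / u - 1) = m - u by field; lra.
lra.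
Qed.

Lemma xlnx_scale e b : 0 < e -> 0 <= b -> xlnx (e * b) = e * xlnx b + e * ln e * b.
Proof.
rewrite /xlnx => e_gt0 b_ge0.
have [->|b_neq0] := Req_dec b 0; first by rewrite !Rmult_0_r Rmult_0_l; ring.
by rewrite ln_mult; lra || ring.
Qed.

Lemma xlnx_convex e a b : 0 < e < 1 -> 0 <= a -> 0 <= b ->
  xlnx ((1 - e) * a + e * b) <= (1 - e) * xlnx a + e * xlnx b.
Proof.
move=> e01 a_ge0 b_ge0; set m := (1 - e) * a + e * b.
have [m0|m_neq0] := Req_dec m 0.
  have [-> ->] : a = 0 /\ b = 0 by rewrite /m in m0; split; nra.
  by rewrite m0 xlnx0; lra.
have m_gt0 : 0 < m by rewrite /m in m_neq0 *; nra.
have := xlnx_tangent a_ge0 m_gt0; have := xlnx_tangent b_ge0 m_gt0.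
have : (1 - e) * (ln m + 1) * (a - m) + e * (ln m + 1) * (b - m) = 0 by rewrite /m; ring.
nra.
Qed.

(* Along the segment from a to b, the increment of u ln u is controlled up to
   first order in e, except where a = 0: there the slope of u ln u is -oo and
   the increment carries the extra term e ln e b.  [fresh a b] is that part of
   b, and [xlnx_slope a b] the remaining first-order coefficient. *)
Definition fresh (a b : R) := if Req_EM_T a 0 then b else 0.
Definition xlnx_slope (a b : R) := if Req_EM_T a 0 then xlnx b else (ln a + 1) * (b - a).

Lemma fresh_ge0 a b : 0 <= b -> 0 <= fresh a b.
Proof. by rewrite /fresh; case: Req_EM_T => _ /=; lra. Qed.

Lemma xlnx_mix_le e a b : 0 < e < 1 -> 0 <= a -> 0 <= b ->
  xlnx ((1 - e) * a + e * b) - xlnx a <= e * (xlnx b - xlnx a) + e * ln e * fresh a b.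
Proof.
move=> e01 a_ge0 b_ge0; rewrite /fresh; case: Req_EM_T => [a0|_] /=.
  by rewrite a0 Rmult_0_r Rplus_0_l xlnx_scale ?xlnx0; lra.
by have := xlnx_convex e01 a_ge0 b_ge0; lra.
Qed.

Lemma xlnx_mix_ge e a b : 0 < e < 1 -> 0 <= a -> 0 <= b ->
  e * xlnx_slope a b + e * ln e * fresh a b <= xlnx ((1 - e) * a + e * b) - xlnx a.
Proof.
move=> e01 a_ge0 b_ge0; rewrite /fresh /xlnx_slope; case: Req_EM_T => [a0|a_neq0] /=.
  by rewrite a0 Rmult_0_r Rplus_0_l xlnx_scale ?xlnx0; lra.
have a_gt0 : 0 < a by lra.
have := xlnx_tangent (_ : 0 <= (1 - e) * a + e * b) a_gt0.
have -> : (1 - e) * a + e * b - a = e * (b - a) by ring.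
by move=> /(_ ltac:(nra)); lra.
Qed.

Lemma exists_weight_xlnx_dominates K q :
  0 < q -> exists2 e, 0 < e < 1 & e * K + e * ln e * q < 0.
Proof.
move=> q_gt0; set c := (Rabs K + 1) / q.
have c_gt0 : 0 < c by apply: Rdiv_lt_0_compat => //; have := Rabs_pos K; lra.
exists (exp (- c)).
  split; first exact: exp_pos.
  by rewrite -exp_0; apply: exp_increasing; lra.
rewrite ln_exp.
have -> : exp (- c) * - c * q = - exp (- c) * (Rabs K + 1) by rewrite /c; field; lra.
have := exp_pos (- c); have := Rle_abs K; nra.
Qed.

Section CondMI.
Variables T X Y : finType.
Implicit Types Q : T -> X -> Y -> R.

Definition condEntTY Q := rsum (fun t : T => rsum (fun y : Y =>
  margTY Q t y * ln (margY Q y) - margTY Q t y * ln (margTY Q t y))).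

Definition negCondEntTXY Q := rsum (fun x : X => rsum (fun y : Y =>
  rsum (fun t : T => xlnx (Q t x y)) - xlnx (margXY Q x y))).

Lemma rsum3_exchange (F : T -> X -> Y -> R) :
  rsum (fun t => rsum (fun x => rsum (fun y => F t x y))) =
  rsum (fun x => rsum (fun y => rsum (fun t => F t x y))).
Proof. by rewrite rsum_exchange; apply: eq_rsum => x; apply: rsum_exchange. Qed.

Lemma condMI_term Q t x y : (forall t x y, 0 <= Q t x y) ->
  (if Req_EM_T (Q t x y) 0 then 0
   else Q t x y * ln (Q t x y * margY Q y / (margTY Q t y * margXY Q x y)))
  = xlnx (Q t x y) - Q t x y * ln (margXY Q x y)
    + (Q t x y * ln (margY Q y) - Q t x y * ln (margTY Q t y)).
Proof.
move=> Q_ge0; case: Req_EM_T => [Q0|Q_neq0] /=; first by rewrite Q0 xlnx0; ring.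
have Q_gt0 : 0 < Q t x y by have := Q_ge0 t x y; lra.
have le_TY : Q t x y <= margTY Q t y by apply: (rsum_ge_term x) => i.
have le_XY : Q t x y <= margXY Q x y by apply: (rsum_ge_term t) => i.
have le_Y : margTY Q t y <= margY Q y.
  by apply: (rsum_ge_term t) => i; apply: rsum_ge0 => j.
by rewrite ln_mul_div /xlnx; try ring; lra.
Qed.

Lemma condMI_decomposition Q : (forall t x y, 0 <= Q t x y) ->
  condMI Q = negCondEntTXY Q + condEntTY Q.
Proof.
move=> Q_ge0; rewrite /condMI.
under eq_rsum => t do under eq_rsum => x do
  under eq_rsum => y do rewrite condMI_term //.
under eq_rsum => t do under eq_rsum => x do rewrite rsumD.
under eq_rsum => t do rewrite rsumD.
rewrite rsumD rsum3_exchange; congr (_ + _).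
  by apply: eq_rsum => x; apply: eq_rsum => y; rewrite rsumB rsumZr.
apply: eq_rsum => t; rewrite rsum_exchange; apply: eq_rsum => y.
by rewrite rsumB !rsumZr.
Qed.

Lemma condEntTY_eq Q1 Q2 :
  (forall t y, margTY Q1 t y = margTY Q2 t y) -> condEntTY Q1 = condEntTY Q2.
Proof.
move=> eqTY; have eqY : forall y, margY Q1 y = margY Q2 y.
  by move=> y; apply: eq_rsum => t; apply: eqTY.
by apply: eq_rsum => t; apply: eq_rsum => y; rewrite eqTY eqY.
Qed.

Lemma DeltaP_ge0 P Q : DeltaP P Q -> forall t x y, 0 <= Q t x y.
Proof. by case=> [[]]. Qed.

Definition mixture e Q1 Q2 : T -> X -> Y -> R :=
  fun t x y => (1 - e) * Q1 t x y + e * Q2 t x y.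

Lemma rsum_mixture (I : finType) e (F G : I -> R) :
  rsum (fun i => (1 - e) * F i + e * G i) = (1 - e) * rsum F + e * rsum G.
Proof. by rewrite rsumD !rsumZ. Qed.

Lemma DeltaP_mixture P Q1 Q2 e :
  0 < e < 1 -> DeltaP P Q1 -> DeltaP P Q2 -> DeltaP P (mixture e Q1 Q2).
Proof.
move=> e01 [[Q1_ge0 Q1_sum] [Q1_TX Q1_TY]] [[Q2_ge0 Q2_sum] [Q2_TX Q2_TY]].
split; [split | split] => [t x y | | t x | t y]; rewrite /mixture.
- by have := Q1_ge0 t x y; have := Q2_ge0 t x y; nra.
- under eq_rsum => t do under eq_rsum => x do rewrite rsum_mixture.
  under eq_rsum => t do rewrite rsum_mixture.
  by rewrite rsum_mixture Q1_sum Q2_sum; ring.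
- by rewrite /margTX rsum_mixture -!/(margTX _ t x) Q1_TX Q2_TX; ring.
- by rewrite /margTY rsum_mixture -!/(margTY _ t y) Q1_TY Q2_TY; ring.
Qed.

Definition mixSlope Q1 Q2 := rsum (fun x : X => rsum (fun y : Y =>
  rsum (fun t : T => xlnx (Q2 t x y) - xlnx (Q1 t x y))
  - xlnx_slope (margXY Q1 x y) (margXY Q2 x y))).

Definition freshMass Q1 Q2 := rsum (fun x : X => rsum (fun y : Y =>
  rsum (fun t : T => fresh (Q1 t x y) (Q2 t x y))
  - fresh (margXY Q1 x y) (margXY Q2 x y))).

Lemma negCondEntTXY_mixture_le Q1 Q2 e : 0 < e < 1 ->
  (forall t x y, 0 <= Q1 t x y) -> (forall t x y, 0 <= Q2 t x y) ->
  negCondEntTXY (mixture e Q1 Q2) - negCondEntTXY Q1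
    <= e * mixSlope Q1 Q2 + e * ln e * freshMass Q1 Q2.
Proof.
move=> e01 Q1_ge0 Q2_ge0.
rewrite /negCondEntTXY /mixSlope /freshMass -rsumB -!rsumZ -rsumD.
apply: rsum_le => x; rewrite -rsumB -!rsumZ -rsumD; apply: rsum_le => y.
have -> : margXY (mixture e Q1 Q2) x y = (1 - e) * margXY Q1 x y + e * margXY Q2 x y.
  by rewrite /margXY /mixture rsum_mixture.
have XY1_ge0 : 0 <= margXY Q1 x y by apply: rsum_ge0 => t.
have XY2_ge0 : 0 <= margXY Q2 x y by apply: rsum_ge0 => t.
have := xlnx_mix_ge e01 XY1_ge0 XY2_ge0.
have : rsum (fun t => xlnx (mixture e Q1 Q2 t x y)) - rsum (fun t => xlnx (Q1 t x y))
  <= e * rsum (fun t => xlnx (Q2 t x y) - xlnx (Q1 t x y))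
     + e * ln e * rsum (fun t => fresh (Q1 t x y) (Q2 t x y)).
  rewrite -rsumB -!rsumZ -rsumD; apply: rsum_le => t.
  exact: xlnx_mix_le e01 (Q1_ge0 t x y) (Q2_ge0 t x y).
lra.
Qed.

(* Each (x,y)-summand of [freshMass] is nonnegative: if Q1 vanishes on the
   whole fibre over (x,y), the two fresh masses coincide. *)
Lemma freshMass_summand_ge0 Q1 Q2 x y :
  (forall t x y, 0 <= Q1 t x y) -> (forall t x y, 0 <= Q2 t x y) ->
  0 <= rsum (fun t : T => fresh (Q1 t x y) (Q2 t x y)) - fresh (margXY Q1 x y) (margXY Q2 x y).
Proof.
move=> Q1_ge0 Q2_ge0; rewrite {2}/fresh; case: Req_EM_T => [XY0|_] /=.
  rewrite (@eq_rsum _ _ (fun t => Q2 t x y)) /margXY; first lra.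
  move=> t; rewrite /fresh (rsum_eq0_term t (fun i => Q1_ge0 i x y) XY0).
  by case: Req_EM_T.
have := rsum_ge0 (fun t => fresh_ge0 (Q1 t x y) (Q2_ge0 t x y)); lra.
Qed.

Lemma freshMass_ge_entry Q1 Q2 t x y :
  (forall t x y, 0 <= Q1 t x y) -> (forall t x y, 0 <= Q2 t x y) ->
  Q1 t x y = 0 -> margXY Q1 x y <> 0 -> Q2 t x y <= freshMass Q1 Q2.
Proof.
move=> Q1_ge0 Q2_ge0 Q1_0 XY_neq0.
have summand_ge0 := fun x y => freshMass_summand_ge0 x y Q1_ge0 Q2_ge0.
apply: Rle_trans (rsum_ge_term x (fun x => rsum_ge0 (summand_ge0 x))).
apply: Rle_trans (rsum_ge_term y (summand_ge0 x)).
rewrite {2}/fresh; case: Req_EM_T => //= _.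
have := rsum_ge_term t (fun t => fresh_ge0 (Q1 t x y) (Q2_ge0 t x y)).
by rewrite {1}/fresh Q1_0; case: Req_EM_T => //= _; lra.
Qed.

Lemma CMI_minimizer_margXY_eq0 P Qs Q t x y :
  is_CMI_minimizer P Qs -> DeltaP P Q -> Q t x y <> 0 -> Qs t x y = 0 ->
  margXY Qs x y = 0.
Proof.
move=> [DQs Qs_min] DQ Q_neq0 Qs_0; apply: NNPP => XY_neq0.
have Qs_ge0 := DeltaP_ge0 DQs; have Q_ge0 := DeltaP_ge0 DQ.
have Q_gt0 : 0 < Q t x y by have := Q_ge0 t x y; lra.
have [e e01 Qe_better] := exists_weight_xlnx_dominates (mixSlope Qs Q) Q_gt0.
have DQe := DeltaP_mixture e01 DQs DQ.
have := Qs_min _ DQe.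
rewrite (condMI_decomposition Qs_ge0) (condMI_decomposition (DeltaP_ge0 DQe)).
rewrite (@condEntTY_eq _ Qs) => [|t' y']; last first.
  by case: DQe => _ [_ ->]; case: DQs => _ [_ ->].
have := negCondEntTXY_mixture_le e01 Qs_ge0 Q_ge0.
have e_ln_e_lt0 : e * ln e < 0.
  by apply: Rmult_pos_neg; [lra | rewrite -ln_1; apply: ln_increasing; lra].
have := freshMass_ge_entry Qs_ge0 Q_ge0 Qs_0 XY_neq0.
nra.
Qed.

End CondMI.

Theorem mainTheorem5 (T X Y : finType) (P Qs : T -> X -> Y -> R)
  (hP : is_dist P) (hQs : is_CMI_minimizer P Qs)
  (t : T) (x : X) (y : Y) (hsupp : suppDeltaP P t x y)
  (h0 : Qs t x y = 0) :
  margXY Qs x y = 0 /\ (forall t' : T, Qs t' x y = 0).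
Proof.
have [Q [DQ Q_neq0]] := hsupp.
have XY0 := CMI_minimizer_margXY_eq0 hQs DQ Q_neq0 h0.
split=> // t'.
by apply: rsum_eq0_term XY0 => i; apply: (DeltaP_ge0 hQs.1).
Qed.
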